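(* Let $X$ be a normal Hausdorff topological space and $\Phi$ a local semiflow on $X$. Let $M\subset X$ be closed, and assume $M$ attracts an admissible neighborhood $N$ of itself. Then $\mathscr A=\omega(N)$ is an attractor of $\Phi$.
   Context: A local semiflow $\Phi$ on $X$ is a continuous map from an open subset $\mathcal D_\Phi\subset\mathbb R^+\times X$ to $X$ such that: (i) for each $x$ there is $T_x\in(0,\infty]$ with $(t,x)\in\mathcal D_\Phi$ iff $t\in[0,T_x)$; (ii) $\Phi(0,x)=x$; (iii) if $(t+s,x)\in\mathcal D_\Phi$ with $t,s\ge0$ then $\Phi(t+s,x)=\Phi(t,\Phi(s,x))$. Write $\Phi(t)x=\Phi(t,x)$, $\Phi(J)M=\{\Phi(t)x:x\in M,\ t\in J\cap[0,T_x)\}$, $\Phi(t)M=\Phi(\{t\})M$. Convention: $U$ is a neighborhood of $A$ if $\overline A\subset\mathrm{int}\,U$. $N$ is admissible if for any $x_n\in N$, $t_n\to\infty$ with $\Phi([0,t_n])x_n\subset N$, the sequence $\Phi(t_n)x_n$ has a convergent subsequence. $\omega(N)=\{y:\exists x_n\in N,\ t_n\to\infty,\ \Phi(t_n)x_n\to y\}$. A set $K$ is invariant if $\Phi(t)K\subset K$ and $K\subset\Phi(t)K$ for all $t\ge0$. $K$ attracts $B$ if $T_x=\infty$ for all $x\in B$ and for every neighborhood $V$ of $K$ there is $t_0>0$ with $\Phi(t)B\subset V$ for all $t>t_0$. A set is s-compact if every sequence in it has a subsequence converging to a point of the set. An attractor is a nonempty s-compact invariant set $\mathscr A$ for which there is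 a neighborhood $N'$ of $\mathscr A$ such that $\mathscr A$ attracts $N'$ and every s-compact invariant subset of $N'$ is contained in $\mathscr A$. Normal: disjoint closed sets have disjoint open neighborhoods. *)

From HB Require Import structures.
From mathcomp Require Import all_boot all_order all_algebra.
From mathcomp Require Import all_classical all_reals all_analysis.
Set Implicit Arguments. Unset Strict Implicit. Unset Printing Implicit Defensive.
Import Order.TTheory GRing.Theory Num.Theory.
Import numFieldNormedType.Exports.
Local Open Scope classical_set_scope.
Local Open Scope ring_scope.

Section LocalSemiflow.
Variables (R : realType) (X : topologicalType).

Definition normal_sep : Prop :=
  forall A B : set X, closed A -> closed B -> A `&` B = set0 ->
    exists U V : set X, [/\ open U, open V, A `<=` U, B `<=` V & U `&` V = set0].

(* A local semiflow is given by the escape times T : X -> \bar R (T_x in (0,+oo])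
   and a map phi : R -> X -> X, of which only the values on the domain
   D = {(t,x) | 0 <= t < T_x} matter. *)
Definition lsf_dom (T : X -> \bar R) : set (R * X) :=
  [set p | 0 <= p.1 /\ (p.1%:E < T p.2)%E].

Definition is_local_semiflow (T : X -> \bar R) (phi : R -> X -> X) : Prop :=
  [/\ (forall x, (0 < T x)%E),
      (exists U : set (R * X), open U /\ lsf_dom T = U `&` [set p | 0 <= p.1]),
      {within lsf_dom T, continuous (fun p : R * X => phi p.1 p.2)},
      (forall x, phi 0 x = x) &
      (forall t s x, 0 <= t -> 0 <= s -> ((t + s)%:E < T x)%E ->
         lsf_dom T (t, phi s x) /\ phi (t + s) x = phi t (phi s x))].

Variables (T : X -> \bar R) (phi : R -> X -> X).

Definition lsf_image (J : set R) (M : set X) : set X :=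
  [set y | exists x t, [/\ M x, J t, lsf_dom T (t, x) & y = phi t x]].

Definition nbhd_of (U A : set X) : Prop := closure A `<=` interior U.

Definition tends_to_infty (t : nat -> R) : Prop := t @ \oo --> +oo.

Definition has_cvg_subseq (u : nat -> X) (P : set X) : Prop :=
  exists (f : nat -> nat) (y : X),
    [/\ (forall n, (f n < f n.+1)%N), P y & (u \o f) @ \oo --> y].

Definition admissible (N : set X) : Prop :=
  forall (x : nat -> X) (t : nat -> R),
    (forall n, N (x n)) -> tends_to_infty t ->
    (forall n, lsf_dom T (t n, x n)) ->
    (forall n, lsf_image `[0, t n] [set x n] `<=` N) ->
    has_cvg_subseq (fun n => phi (t n) (x n)) setT.

Definition omega (N : set X) : set X :=
  [set y | exists (x : nat -> X) (t : nat -> R),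
     [/\ (forall n, N (x n)), tends_to_infty t,
         (forall n, lsf_dom T (t n, x n)) &
         (fun n => phi (t n) (x n)) @ \oo --> y]].

Definition invariant (K : set X) : Prop :=
  forall t, 0 <= t -> lsf_image [set t] K `<=` K /\ K `<=` lsf_image [set t] K.

Definition attracts (K B : set X) : Prop :=
  (forall x, B x -> T x = +oo%E) /\
  forall V, nbhd_of V K -> exists t0, 0 < t0 /\
    forall t, t0 < t -> lsf_image [set t] B `<=` V.

Definition s_compact (K : set X) : Prop :=
  forall u : nat -> X, (forall n, K (u n)) -> has_cvg_subseq u K.

Definition attractor (A : set X) : Prop :=
  [/\ A !=set0, s_compact A, invariant A &
      exists N', [/\ nbhd_of N' A, attracts A N' &
        forall K, s_compact K -> invariant K -> K `<=` N' -> K `<=` A]].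

End LocalSemiflow.

From Pilot Require Import Defs.
From HB Require Import structures.
From mathcomp Require Import all_boot all_order all_algebra.
From mathcomp Require Import all_classical all_reals all_analysis.
From mathcomp Require Import lra.
Import Order.TTheory GRing.Theory Num.Theory.
Import numFieldNormedType.Exports.
Local Open Scope classical_set_scope.
Local Open Scope ring_scope.

(* Since N is a neighbourhood of the attracting set M, there is a time t0
   after which every orbit started in N stays in N.  Restarting orbits at
   time t0 + 1 thus makes the admissibility of N applicable to any sequence
   phi t_n x_n with x_n in N and t_n -> oo: it has a subsequence converging
   to a point of omega(N).  This compactness property shows that omega(N) is
   nonempty, s-compact, invariant (backward invariance also uses uniqueness
   of limits) and attracts N.  Normality gives an open U with closure M in U
   and closure U in int N; as omega(N) lies in the closure of every
   neighbourhood of M, N is a neighbourhood of omega(N).  Finally, a point of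
   an invariant set K in N is phi n x_n with x_n in K for every n, hence lies
   in omega(N). *)

Lemma increasing_cvgn {f : nat -> nat} :
  (forall n, (f n < f n.+1)%N) -> f @ \oo --> \oo.
Proof.
move=> f_incr; have f_ge n : (n <= f n)%N.
  by elim: n => // n IHn; exact: leq_ltn_trans IHn (f_incr n).
apply/cvgnyPge => A; apply: filterS (nbhs_infty_ge A) => n An.
exact: leq_trans An (f_ge n).
Qed.

Lemma tends_to_inftyDr {R : realType} (c : R) {s : nat -> R} :
  tends_to_infty s -> tends_to_infty (fun n => s n + c).
Proof.
move=> /cvgryPge s_oo; apply/cvgryPge => A.
by apply: filterS (s_oo (A - c)) => n ?; lra.
Qed.

Lemma nbhd_of_subset {X : topologicalType} {U A : set X} :
  nbhd_of U A -> A `<=` U.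
Proof. by move=> UA x /subset_closure /UA /interior_subset. Qed.

Lemma normal_closure_subset {X : topologicalType} {A O : set X} :
  normal_sep X -> closed A -> open O -> A `<=` O ->
  exists U, [/\ open U, A `<=` U & closure U `<=` O].
Proof.
move=> normX clA oO AO.
have [|U [W [oU oW AU OW UW0]]] := normX A (~` O) clA (open_closedC oO).
  by apply/seteqP; split => x // [/AO].
exists U; split => //.
have UW : U `<=` ~` W by move=> x Ux Wx; suff : (U `&` W) x by rewrite UW0.
have clW : closed (~` W) by rewrite closedC.
move=> x /(closureS UW); rewrite -((closure_id _).1 clW) => nWx.
by apply: contrapT => nOx; exact: nWx (OW _ nOx).
Qed.

Section LocalSemiflow.
Context {R : realType} {X : topologicalType} {T : X -> \bar R} {phi : R -> X -> X}.

Lemma lsf_dom_infty {x s} : T x = +oo%E -> 0 <= s -> lsf_dom T (s, x).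
Proof. by move=> Tx s_ge0; split => //=; rewrite Tx ltry. Qed.

Lemma lsf_cvg {t} {z : nat -> X} {v} : is_local_semiflow T phi ->
  lsf_dom T (t, v) -> (forall n, lsf_dom T (t, z n)) -> z @ \oo --> v ->
  phi t (z n) @[n --> \oo] --> phi t v.
Proof.
move=> [_ _ phi_cont _ _] dom_v dom_z zv.
have tz_within : (fun n => (t, z n)) @ \oo --> within (lsf_dom T) (nbhs (t, v)).
  move=> B; rewrite !nbhs_simpl /within => dom_B.
  have : \forall n \near \oo, lsf_dom T (t, z n) -> B (t, z n).
    exact: cvg_pair (cvg_cst t) zv _ dom_B.
  by apply: filterS => n /(_ (dom_z n)).
exact: cvg_comp tz_within ((subspace_continuousP _ _).1 phi_cont _ dom_v).
Qed.

Lemma attracts_omega_closure {K B V : set X} :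
  attracts T phi K B -> nbhd_of V K -> omega T phi B `<=` closure V.
Proof.
move=> [_ attKB] VK y [x [t [Bx t_oo dom_t xt_y]]].
have [t1 [_ t1V]] := attKB V VK.
have eventually_V : \forall n \near \oo, closure V (phi (t n) (x n)).
  apply: filterS ((cvgryPgt t).1 t_oo t1) => n t1t.
  by apply/subset_closure/(t1V (t n) t1t); exists (x n), (t n).
exact: closed_cvg (@closed_closure _ V) eventually_V _ xt_y.
Qed.

Lemma invariant_sub_omega (K B : set X) :
  Defs.invariant T phi K -> K `<=` B -> K `<=` omega T phi B.
Proof.
move=> invK KB y Ky.
have /choice [z zP] : forall n : nat,
    exists z, [/\ K z, lsf_dom T (n%:R, z) & y = phi n%:R z].
  move=> n; have [_ /(_ y Ky) [z [r [Kz -> dom_z ->]]]] := invK n%:R (ler0n _ _).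
  by exists z.
exists z, (fun n => n%:R); split.
- by move=> n; have [/KB] := zP n.
- exact: cvgr_idn.
- by move=> n; have [] := zP n.
have -> : (fun n => phi n%:R (z n)) = fun=> y.
  by apply: funext => n; have [_ _ <-] := zP n.
exact: cvg_cst.
Qed.

Section OmegaLimitSet.
Context {N : set X} {t0 : R}.
Hypotheses (sf : is_local_semiflow T phi) (admN : admissible T phi N)
  (N_infty : forall x, N x -> T x = +oo%E) (t0_ge0 : 0 <= t0)
  (N_forward : forall x s, N x -> t0 < s -> N (phi s x)).

Let omegaN := omega T phi N.

Lemma phiD_N {x r s} : N x -> 0 <= r -> 0 <= s ->
  lsf_dom T (r, phi s x) /\ phi (r + s) x = phi r (phi s x).
Proof.
move=> Nx r_ge0 s_ge0; have [_ _ _ _ phiD] := sf.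
by apply: phiD => //; rewrite N_infty // ltry.
Qed.

Lemma admissible_late {x : nat -> X} {s : nat -> R} :
  (forall n, N (x n)) -> tends_to_infty s -> (forall n, t0 + 1 <= s n) ->
  has_cvg_subseq (fun n => phi (s n) (x n)) setT.
Proof.
move=> Nx s_oo s_late.
pose x' n := phi (t0 + 1) (x n); pose s' n := s n - (t0 + 1).
have Nx' n : N (x' n) by apply: N_forward => //; lra.
have s'_ge0 n : 0 <= s' n by rewrite subr_ge0.
have -> : (fun n => phi (s n) (x n)) = fun n => phi (s' n) (x' n).
  apply: funext => n; rewrite /x' -(phiD_N (Nx n) (s'_ge0 n) _).2 ?subrK //.
  exact: addr_ge0.
apply: admN => //.
- exact: tends_to_inftyDr.
- by move=> n; apply: lsf_dom_infty; [exact: N_infty|exact: s'_ge0].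
move=> n _ [w [r [-> r_itv _ ->]]].
move: r_itv; rewrite /= in_itv /= => /andP[r_ge0 _].
rewrite /x' -(phiD_N (Nx n) r_ge0 _).2; last exact: addr_ge0.
by apply: N_forward => //; lra.
Qed.

Lemma omega_cluster {x : nat -> X} {s : nat -> R} :
  (forall n, N (x n)) -> tends_to_infty s ->
  exists g y, [/\ (forall n, (g n < g n.+1)%N), (forall n, 0 <= s (g n)),
    omegaN y & phi (s (g n)) (x (g n)) @[n --> \oo] --> y].
Proof.
move=> Nx s_oo.
have [n0 _ s_late] := (cvgryPge s).1 s_oo (t0 + 1).
have [f [y [f_incr _ fy]]] := admissible_late (fun n => Nx (n + n0)%N)
  (cvg_comp _ _ (cvg_addnr n0) s_oo) (fun n => s_late _ (leq_addl n n0)).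
pose g n := (f n + n0)%N.
have g_incr n : (g n < g n.+1)%N by rewrite ltn_add2r.
have sg_ge0 n : 0 <= s (g n).
  exact: le_trans (addr_ge0 t0_ge0 ler01) (s_late _ (leq_addl _ _)).
exists g, y; split => //.
exists (x \o g), (s \o g); split => //.
- by move=> n; exact: Nx.
- exact: cvg_comp _ _ (increasing_cvgn g_incr) s_oo.
- by move=> n; apply: lsf_dom_infty; [exact: N_infty _ (Nx _)|exact: sg_ge0].
Qed.

Hypothesis omega_nbhd : nbhd_of N omegaN.

Let omega_sub_N {y} : omegaN y -> N y := @nbhd_of_subset _ _ _ omega_nbhd y.

Lemma omega_forward {t} : 0 <= t -> lsf_image T phi [set t] omegaN `<=` omegaN.
Proof.
move=> t_ge0 _ [y [r [om_y -> _ ->]]].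
have [x [s [Nx s_oo dom_s xs_y]]] := om_y.
have s_ge0 n : 0 <= s n by have [] := dom_s n.
exists x, (fun n => s n + t); split => //.
- exact: tends_to_inftyDr.
- by move=> n; apply: lsf_dom_infty; [exact: N_infty _ (Nx _)|exact: addr_ge0].
have -> : (fun n => phi (s n + t) (x n)) = fun n => phi t (phi (s n) (x n)).
  by apply: funext => n; rewrite addrC (phiD_N (Nx n) t_ge0 (s_ge0 n)).2.
apply: (lsf_cvg sf _ _ xs_y).
- exact: lsf_dom_infty (N_infty _ (omega_sub_N om_y)) t_ge0.
- by move=> n; exact: (phiD_N (Nx n) t_ge0 (s_ge0 n)).1.
Qed.

Hypothesis hausX : hausdorff_space X.

Lemma omega_backward {t} : 0 <= t -> omegaN `<=` lsf_image T phi [set t] omegaN.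
Proof.
move=> t_ge0 y [x [s [Nx s_oo _ xs_y]]].
have [g [v [g_incr sg_ge0 om_v xsg_v]]] :=
  omega_cluster Nx (tends_to_inftyDr (- t) s_oo).
have dom_tv : lsf_dom T (t, v).
  exact: lsf_dom_infty (N_infty _ (omega_sub_N om_v)) t_ge0.
exists v, t; split => //.
have xsg_y : phi (s (g n)) (x (g n)) @[n --> \oo] --> y.
  exact: cvg_comp _ _ (increasing_cvgn g_incr) xs_y.
have xsg_tv : phi (s (g n)) (x (g n)) @[n --> \oo] --> phi t v.
  have -> : (fun n => phi (s (g n)) (x (g n))) =
      fun n => phi t (phi (s (g n) - t) (x (g n))).
    by apply: funext => n; rewrite -(phiD_N (Nx _) t_ge0 (sg_ge0 n)).2 addrC subrK.
  apply: (lsf_cvg sf dom_tv _ xsg_v).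
  by move=> n; exact: (phiD_N (Nx _) t_ge0 (sg_ge0 n)).1.
exact: (@cvg_unique _ hausX _ _ _ _ xsg_y xsg_tv).
Qed.

Lemma omega_s_compact : s_compact omegaN.
Proof.
move=> u om_u.
have /choice [v vP] : forall n : nat, exists v, omegaN v /\ u n = phi n%:R v.
  move=> n; have [v [r [om_v -> _ ->]]] := omega_backward (ler0n R n) _ (om_u n).
  by exists v.
have [g [y [g_incr _ om_y vg_y]]] :=
  omega_cluster (fun n => omega_sub_N (vP n).1) (@cvgr_idn R).
exists g, y; split => //.
have -> : u \o g = fun n => phi (g n)%:R (v (g n)).
  by apply: funext => n /=; rewrite (vP _).2.
exact: vg_y.
Qed.

Lemma omega_attracts : attracts T phi omegaN N.
Proof.
split=> // V omV; apply: contrapT => not_attracted.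
have /choice [p pP] : forall n : nat,
    exists p : X * R, [/\ N p.1, n%:R < p.2 & ~ V (phi p.2 p.1)].
  move=> n; apply: contrapT => none; apply: not_attracted.
  exists (n%:R + 1); split; first by have := ler0n R n; lra.
  move=> t nt _ [x [_ [Nx -> _ ->]]]; apply: contrapT => nV.
  by apply: none; exists (x, t); split => //=; lra.
have p_oo : tends_to_infty (fun n => (p n).2).
  have /cvgryPge idn_oo := @cvgr_idn R.
  apply/cvgryPge => A; apply: filterS (idn_oo A) => n.
  by have [_ ? _] := pP n; lra.
have Np n : N (p n).1 by have [] := pP n.
have [g [y [_ _ om_y pg_y]]] := omega_cluster Np p_oo.
have [n Vn] := @filter_ex nat \oo _ _ (pg_y V (omV y (subset_closure om_y))).
by have [_ _] := pP (g n); apply.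
Qed.

Lemma omega_attractor : N !=set0 -> attractor T phi omegaN.
Proof.
move=> [m Nm]; split.
- have [g [y [_ _ om_y _]]] := omega_cluster (fun _ : nat => Nm) (@cvgr_idn R).
  by exists y.
- exact: omega_s_compact.
- by move=> t t_ge0; split; [exact: omega_forward|exact: omega_backward].
exists N; split => //; first exact: omega_attracts.
by move=> K _ invK KN; exact: invariant_sub_omega.
Qed.

End OmegaLimitSet.
End LocalSemiflow.

Theorem theorem4p6 (R : realType) (X : topologicalType)
  (T : X -> \bar R) (phi : R -> X -> X) (M N : set X) :
  normal_sep X -> hausdorff_space X ->
  is_local_semiflow T phi ->
  closed M -> M !=set0 ->
  nbhd_of N M -> admissible T phi N -> attracts T phi M N ->
  attractor T phi (omega T phi N).
Proof.
move=> normX hausX sf _ [m Mm] NM admN [N_infty attMN].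
have [t0 [t0_gt0 t0_N]] := attMN N NM.
have N_forward x s : N x -> t0 < s -> N (phi s x).
  move=> Nx t0s; apply: (t0_N s t0s); exists x, s; split => //.
  by apply: lsf_dom_infty (N_infty _ Nx) _; exact: ltW (lt_trans t0_gt0 t0s).
have [U [oU MU UN]] :=
  normal_closure_subset normX (@closed_closure _ M) (@open_interior _ N) NM.
have UM : nbhd_of U M by move=> x /MU; rewrite ((interior_id U).1 oU).
have omega_nbhd : nbhd_of N (omega T phi N).
  move=> y /(closureS (attracts_omega_closure (conj N_infty attMN) UM)).
  by rewrite -((closure_id _).1 (@closed_closure _ U)) => /UN.
apply: (omega_attractor sf admN N_infty (ltW t0_gt0) N_forward omega_nbhd hausX).
by exists m; apply: (nbhd_of_subset NM).
Qed.
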